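(* Let $G_n$ be a finite simple graph with a fully interconnected graph decomposition $(G_{n_1},\ldots,G_{n_k})$. For each $i\in\{1,\ldots,k\}$ let $\lambda_{i,1},\ldots,\lambda_{i,n_i-1}$ be eigenvalues of $L_{G_{n_i}}$ with real eigenvectors $\mathbf v_{i,1},\ldots,\mathbf v_{i,n_i-1}\in\mathbb R^{V(G_{n_i})}$ such that $\{\mathbf v_{i,1},\ldots,\mathbf v_{i,n_i-1},\tfrac{1}{\sqrt{n_i}}\mathbf 1_{n_i}\}$ is an orthonormal basis of $\mathbb R^{V(G_{n_i})}$. For $j=1,\ldots,k$ let $\alpha_j(1),\ldots,\alpha_j(k)\in\mathbb R$ and let $\mathbf x_j\in\mathbb R^{V(G_n)}$ be the vector with $\mathbf x_j(v)=\alpha_j(l)$ for $v\in V(G_{n_l})$; put $N_j=\sum_{l=1}^k n_l\alpha_j(l)^2$. Assume $\{\mathbf x_j/\sqrt{N_j}\}_{j=1}^k$ is orthonormal and $L_{G_n}\mathbf x_j=\nu_j\mathbf x_j$ for real numbers $\nu_1,\ldots,\nu_k$ (equivalently, $\overline{L}_{G_n}(\alpha_j(1),\ldots,\alpha_j(k))^T=\nu_j(\alpha_j(1),\ldots,\alpha_j(k))^T$). Then for all $t\ge0$: (1) If $x,y\in V(G_{n_i})$, then $$P^x_{G_n,t}(y)=P^x_{G_{n_i},t}(y)+\widetilde P_{i,t}-\frac1{n_i^2}-\frac2{n_i}\sum_{j=1}^{n_i-1}\mathbf v_{i,j}(x)\mathbf v_{i,j}(y)\cos(t\lambda_{i,j})+2\sum_{j=1}^{n_i-1}\sum_{j'=1}^k\frac{\mathbf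 v_{i,j}(x)\mathbf v_{i,j}(y)\alpha_{j'}(i)^2\cos\{t(\lambda_{i,j}+\widetilde d_i-\nu_{j'})\}}{N_{j'}},$$ where $$P^x_{G_{n_i},t}(y)=\sum_{j=1}^{n_i-1}\mathbf v_{i,j}(x)^2\mathbf v_{i,j}(y)^2+\frac1{n_i^2}+2\sum_{1\le j<j'\le n_i-1}\mathbf v_{i,j}(x)\mathbf v_{i,j}(y)\mathbf v_{i,j'}(x)\mathbf v_{i,j'}(y)\cos\{t(\lambda_{i,j}-\lambda_{i,j'})\}+\frac2{n_i}\sum_{j=1}^{n_i-1}\mathbf v_{i,j}(x)\mathbf v_{i,j}(y)\cos(t\lambda_{i,j})$$ is the transition probability of the CTQW on $G_{n_i}$ itself, and $$\widetilde P_{i,t}=\sum_{j=1}^k\frac{\alpha_j(i)^4}{N_j^2}+2\sum_{1\le j<j'\le k}\frac{\alpha_j(i)^2\alpha_{j'}(i)^2\cos\{t(\nu_j-\nu_{j'})\}}{N_jN_{j'}}.$$ (2) If $x\in V(G_{n_i})$ and $y\in V(G_{n_{i'}})$ with $i\ne i'$, then $$P^x_{G_n,t}(y)=\sum_{j=1}^k\frac{\alpha_j(i)^2\alpha_j(i')^2}{N_j^2}+2\sum_{1\le j<j'\le k}\frac{\alpha_j(i)\alpha_j(i')\alpha_{j'}(i)\alpha_{j'}(i')\cos\{t(\nu_j-\nu_{j'})\}}{N_jN_{j'}}.$$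
   Context: For a finite simple graph $G$ with vertex set $V(G)$, $A_G$ is its adjacency matrix, $D_G$ the diagonal degree matrix, and $L_G=D_G-A_G$ its Laplacian. The continuous-time quantum walk (CTQW) on $G$ has evolution operator $U_{G,t}=e^{\sqrt{-1}\,tL_G}$ ($t\ge0$), and for $x,y\in V(G)$ the transition probability is $P^x_{G,t}(y)=|(U_{G,t})_{x,y}|^2$ (walker starting at $x$). A fully interconnected graph decomposition of a simple graph $G_n$ on $n$ vertices is a tuple $(G_{n_1},\ldots,G_{n_k})$ of induced subgraphs of $G_n$, $G_{n_i}$ having $n_i$ vertices, whose vertex sets partition $V(G_n)$, such that for every $i\ne j$ either every vertex of $G_{n_i}$ is adjacent to every vertex of $G_{n_j}$ (written $G_{n_i}\sim G_{n_j}$) or no vertex of $G_{n_i}$ is adjacent to any vertex of $G_{n_j}$. Set $\widetilde d_i=\sum_{j:\,G_{n_i}\sim G_{n_j}}n_j$. $\overline L_{G_n}$ is the $k\times k$ matrix with diagonal entries $\widetilde d_i$, $(i,j)$ entry $-n_j$ if $G_{n_i}\sim G_{n_j}$ ($i\neq j$), and $0$ otherwise. $\mathbf 1_m$ is the all-ones vector of length $m$; $\mathbf v(x)$ denotes the component of a vector at vertex $x$. *)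

From Stdlib Require Import Reals List Arith ClassicalEpsilon.
Import ListNotations.
Open Scope R_scope.

(* Vertices are natural numbers; a graph is given by a finite vertex list V
   (duplicate-free) and a boolean adjacency relation adj. *)

Fixpoint rsum (m : nat) (f : nat -> R) : R :=
  match m with O => 0 | S p => rsum p f + f p end.

Definition lsum (V : list nat) (f : nat -> R) : R :=
  fold_right (fun z acc => f z + acc) 0 V.

Definition deg (V : list nat) (adj : nat -> nat -> bool) (x : nat) : R :=
  lsum V (fun z => if adj x z then 1 else 0).

Definition Lap (V : list nat) (adj : nat -> nat -> bool) (x y : nat) : R :=
  (if Nat.eqb x y then deg V adj x else 0) - (if adj x y then 1 else 0).

Definition matmul (V : list nat) (A B : nat -> nat -> R) (x y : nat) : R :=
  lsum V (fun z => A x z * B z y).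

Fixpoint matpow (V : list nat) (A : nat -> nat -> R) (p : nat) : nat -> nat -> R :=
  match p with
  | O => fun x y => if Nat.eqb x y then 1 else 0
  | S q => matmul V A (matpow V A q)
  end.

Definition series_value (f : nat -> R) : R :=
  epsilon (inhabits 0) (fun l => infinite_sum f l).

(* U_t = e^{i t L} = Σ_m (i t L)^m / m! ; real and imaginary parts of entries *)
Definition Ure (V : list nat) (adj : nat -> nat -> bool) (t : R) (x y : nat) : R :=
  series_value (fun m => (-1) ^ m * t ^ (2 * m) / INR (fact (2 * m))
                          * matpow V (Lap V adj) (2 * m) x y).

Definition Uim (V : list nat) (adj : nat -> nat -> bool) (t : R) (x y : nat) : R :=
  series_value (fun m => (-1) ^ m * t ^ (2 * m + 1) / INR (fact (2 * m + 1))
                          * matpow V (Lap V adj) (2 * m + 1) x y).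

Definition Ptrans (V : list nat) (adj : nat -> nat -> bool) (t : R) (x y : nat) : R :=
  Ure V adj t x y ^ 2 + Uim V adj t x y ^ 2.

(* vertex set of the i-th block of the decomposition given by c : V(G_n) -> blocks *)
Definition part (n : nat) (c : nat -> nat) (i : nat) : list nat :=
  filter (fun v => Nat.eqb (c v) i) (seq 0 n).

Definition all_adj (n : nat) (c : nat -> nat) (adj : nat -> nat -> bool) (i j : nat) : Prop :=
  forall x y, In x (part n c i) -> In y (part n c j) -> adj x y = true.

Definition no_adj (n : nat) (c : nat -> nat) (adj : nat -> nat -> bool) (i j : nat) : Prop :=
  forall x y, In x (part n c i) -> In y (part n c j) -> adj x y = false.

Definition dtilde (n k : nat) (c : nat -> nat) (adj : nat -> nat -> bool) (i : nat) : R :=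
  rsum k (fun j => if excluded_middle_informative (j <> i /\ all_adj n c adj i j)
                   then INR (length (part n c j)) else 0).

From Stdlib Require Import Reals List Arith Lia Lra ClassicalEpsilon.
From mathcomp Require all_boot all_algebra Rstruct.
Open Scope R_scope.

(* The Laplacian of G_n has an orthonormal eigenbasis formed by the block eigenvectors
   v_{i,j}, extended by zero outside G_{n_i}, with eigenvalues lam_{i,j} + dtilde_i, and by
   the x_j / sqrt N_j, with eigenvalues nu_j.  Completeness of this basis, and of the basis
   {v_{i,j}} + {1 / sqrt n_i} of each block, expresses every entry of L^q as a finite sum
   sum_p a_p mu_p^q.  Summing the exponential series then gives
   (U_t)_{x,y} = sum_p a_p e^{i t mu_p}, and |.|^2 of such a sum is
   sum_p a_p^2 + 2 sum_{p<p'} a_p a_p' cos (t (mu_p - mu_p')), which yields the formulas. *)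

Lemma rsum_ext (m : nat) (f g : nat -> R) :
  (forall p, (p < m)%nat -> f p = g p) -> rsum m f = rsum m g.
Proof.
induction m as [|m IH]; intro H; simpl; [reflexivity|].
rewrite IH by (intros; apply H; lia). rewrite H by lia. reflexivity.
Qed.

Lemma rsum_tri_ext (m : nat) (f g : nat -> nat -> R) :
  (forall p p', (p < p')%nat -> (p' < m)%nat -> f p p' = g p p') ->
  rsum m (fun p' => rsum p' (fun p => f p p')) = rsum m (fun p' => rsum p' (fun p => g p p')).
Proof. intro H. apply rsum_ext. intros p' Hp'. apply rsum_ext. intros p Hp. apply H; assumption. Qed.

Lemma rsum_plus (m : nat) (f g : nat -> R) :
  rsum m (fun p => f p + g p) = rsum m f + rsum m g.
Proof. induction m; simpl; [ring | rewrite IHm; ring]. Qed.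

Lemma rsum_scal (m : nat) (a : R) (f : nat -> R) :
  rsum m (fun p => a * f p) = a * rsum m f.
Proof. induction m; simpl; [ring | rewrite IHm; ring]. Qed.

Lemma rsum_const0 (m : nat) : rsum m (fun _ => 0) = 0.
Proof. induction m; simpl; [ring | rewrite IHm; ring]. Qed.

Lemma rsum_1 (f : nat -> R) : rsum 1 f = f 0%nat.
Proof. simpl; ring. Qed.

Lemma rsum_delta (k i : nat) (a : R) :
  (i < k)%nat -> rsum k (fun l => if Nat.eqb l i then a else 0) = a.
Proof.
induction k as [|k IH]; intro Hi; [lia|]. simpl.
destruct (Nat.eqb_spec k i) as [->|Hki].
- rewrite (rsum_ext _ _ (fun _ => 0)), rsum_const0; [ring|].
  intros p Hp; destruct (Nat.eqb_spec p i); [lia | reflexivity].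
- rewrite IH by lia; ring.
Qed.

Lemma rsum_nonneg (m : nat) (f : nat -> R) :
  (forall p, (p < m)%nat -> 0 <= f p) -> 0 <= rsum m f.
Proof.
induction m as [|m IH]; intro H; simpl; [lra|].
assert (0 <= rsum m f) by (apply IH; intros; apply H; lia).
assert (0 <= f m) by (apply H; lia). lra.
Qed.

Lemma lsum_ext (V : list nat) (f g : nat -> R) :
  (forall z, In z V -> f z = g z) -> lsum V f = lsum V g.
Proof.
induction V as [|a V IH]; intro H; simpl; [reflexivity|].
rewrite H by (left; reflexivity). rewrite IH by (intros; apply H; right; assumption).
reflexivity.
Qed.

Lemma lsum_plus (V : list nat) (f g : nat -> R) :
  lsum V (fun z => f z + g z) = lsum V f + lsum V g.
Proof. induction V; simpl; [ring | rewrite IHV; ring]. Qed.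

Lemma lsum_minus (V : list nat) (f g : nat -> R) :
  lsum V (fun z => f z - g z) = lsum V f - lsum V g.
Proof. induction V; simpl; [ring | rewrite IHV; ring]. Qed.

Lemma lsum_scal_r (V : list nat) (a : R) (f : nat -> R) :
  lsum V (fun z => f z * a) = lsum V f * a.
Proof. induction V; simpl; [ring | rewrite IHV; ring]. Qed.

Lemma lsum_const (V : list nat) (a : R) : lsum V (fun _ => a) = INR (length V) * a.
Proof. induction V; simpl length; [simpl; ring | rewrite S_INR; simpl; rewrite IHV; ring]. Qed.

Lemma lsum_app (V W : list nat) (f : nat -> R) : lsum (V ++ W) f = lsum V f + lsum W f.
Proof. induction V; simpl; [ring | rewrite IHV; ring]. Qed.

Lemma lsum_seq (m : nat) (f : nat -> R) : lsum (seq 0 m) f = rsum m f.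
Proof. induction m; [reflexivity|]. rewrite seq_S, lsum_app, IHm. simpl; ring. Qed.

Lemma lsum_rsum (V : list nat) (m : nat) (f : nat -> nat -> R) :
  lsum V (fun z => rsum m (fun p => f p z)) = rsum m (fun p => lsum V (f p)).
Proof.
induction m; simpl.
- rewrite lsum_const; ring.
- rewrite lsum_plus, IHm. reflexivity.
Qed.

Lemma lsum_delta (V : list nat) (x : nat) (f : nat -> R) :
  NoDup V -> In x V -> lsum V (fun z => if Nat.eqb x z then f z else 0) = f x.
Proof.
induction V as [|a V IH]; intros ND Hx; [destruct Hx|].
inversion_clear ND as [|? ? Ha ND']. simpl. destruct Hx as [->|Hx].
- rewrite Nat.eqb_refl, (lsum_ext _ _ (fun _ => 0)), lsum_const; [ring|].
  intros z Hz; destruct (Nat.eqb_spec x z); [subst; contradiction | reflexivity].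
- destruct (Nat.eqb_spec x a); [subst; contradiction|]. rewrite IH by assumption; ring.
Qed.

Lemma lsum_filter (P : nat -> bool) (V : list nat) (f : nat -> R) :
  lsum (filter P V) f = lsum V (fun z => if P z then f z else 0).
Proof. induction V as [|a V IH]; simpl; [reflexivity|]. destruct (P a); simpl; rewrite IH; ring. Qed.

Lemma series_value_eq (f : nat -> R) (l : R) : infinite_sum f l -> series_value f = l.
Proof.
intro H. unfold series_value. apply (uniqueness_sum f); [apply epsilon_spec; exists l |]; exact H.
Qed.

Lemma infinite_sum_ext (f g : nat -> R) (l : R) :
  (forall m, f m = g m) -> infinite_sum f l -> infinite_sum g l.
Proof.
intros E. apply Un_cv_ext. intro m. apply sum_eq. intros; apply E.
Qed.

Lemma infinite_sum_0 : infinite_sum (fun _ => 0) 0.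
Proof.
intros eps He. exists 0%nat. intros m _.
rewrite sum_eq_R0 by reflexivity. unfold R_dist. rewrite Rminus_diag, Rabs_R0. exact He.
Qed.

Lemma infinite_sum_plus (f g : nat -> R) (a b : R) :
  infinite_sum f a -> infinite_sum g b -> infinite_sum (fun m => f m + g m) (a + b).
Proof.
intros Ha Hb. apply (Un_cv_ext (fun N => sum_f_R0 f N + sum_f_R0 g N)).
- intro N. symmetry. apply plus_sum.
- apply CV_plus; assumption.
Qed.

Lemma infinite_sum_scal (f : nat -> R) (a c : R) :
  infinite_sum f a -> infinite_sum (fun m => c * f m) (c * a).
Proof.
intro Ha. apply (Un_cv_ext (fun N => c * sum_f_R0 f N)).
- intro N. rewrite scal_sum. apply sum_eq. intros; ring.
- apply (CV_mult (fun _ => c)); [|exact Ha].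
  intros eps He. exists 0%nat. intros. unfold R_dist. rewrite Rminus_diag, Rabs_R0. exact He.
Qed.

Lemma cos_series (t mu : R) :
  infinite_sum (fun m => (-1) ^ m * t ^ (2 * m) / INR (fact (2 * m)) * mu ^ (2 * m))
    (cos (t * mu)).
Proof.
unfold cos. destruct (exist_cos (Rsqr (t * mu))) as [l Hl].
apply (infinite_sum_ext (fun m => cos_n m * Rsqr (t * mu) ^ m)); [|exact Hl].
intro m. unfold cos_n, Rsqr. replace (t * mu * (t * mu)) with (t ^ 2 * mu ^ 2) by ring.
rewrite Rpow_mult_distr, !pow_mult. unfold Rdiv. ring.
Qed.

Lemma sin_series (t mu : R) :
  infinite_sum (fun m => (-1) ^ m * t ^ (2 * m + 1) / INR (fact (2 * m + 1)) * mu ^ (2 * m + 1))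
    (sin (t * mu)).
Proof.
unfold sin. destruct (exist_sin (Rsqr (t * mu))) as [l Hl].
apply (infinite_sum_ext (fun m => t * mu * (sin_n m * Rsqr (t * mu) ^ m))).
- intro m. unfold sin_n, Rsqr. replace (t * mu * (t * mu)) with (t ^ 2 * mu ^ 2) by ring.
  rewrite Rpow_mult_distr, !pow_add, !pow_mult. unfold Rdiv. ring.
- apply infinite_sum_scal. exact Hl.
Qed.

Lemma cos_series_rsum (t : R) (m : nat) (a mu : nat -> R) :
  infinite_sum (fun q => (-1) ^ q * t ^ (2 * q) / INR (fact (2 * q))
                         * rsum m (fun p => a p * mu p ^ (2 * q)))
    (rsum m (fun p => a p * cos (t * mu p))).
Proof.
induction m as [|m IH]; simpl.
- apply (infinite_sum_ext (fun _ => 0)); [intro; ring | exact infinite_sum_0].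
- eapply infinite_sum_ext;
    [| apply infinite_sum_plus; [exact IH | apply infinite_sum_scal, cos_series]].
  intro q; simpl; ring.
Qed.

Lemma sin_series_rsum (t : R) (m : nat) (a mu : nat -> R) :
  infinite_sum (fun q => (-1) ^ q * t ^ (2 * q + 1) / INR (fact (2 * q + 1))
                         * rsum m (fun p => a p * mu p ^ (2 * q + 1)))
    (rsum m (fun p => a p * sin (t * mu p))).
Proof.
induction m as [|m IH]; simpl.
- apply (infinite_sum_ext (fun _ => 0)); [intro; ring | exact infinite_sum_0].
- eapply infinite_sum_ext;
    [| apply infinite_sum_plus; [exact IH | apply infinite_sum_scal, sin_series]].
  intro q; simpl; ring.
Qed.

Lemma cos_sum_cross (t : R) (m : nat) (a mu : nat -> R) (m' : nat) (b nu : nat -> R) :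
  rsum m (fun p => a p * cos (t * mu p)) * rsum m' (fun q => b q * cos (t * nu q))
  + rsum m (fun p => a p * sin (t * mu p)) * rsum m' (fun q => b q * sin (t * nu q))
  = rsum m (fun p => rsum m' (fun q => a p * b q * cos (t * (mu p - nu q)))).
Proof.
induction m as [|m IH]; simpl; [ring|]. rewrite <- IH.
assert (Hm : rsum m' (fun q => a m * b q * cos (t * (mu m - nu q)))
  = a m * (cos (t * mu m) * rsum m' (fun q => b q * cos (t * nu q))
           + sin (t * mu m) * rsum m' (fun q => b q * sin (t * nu q)))).
{ rewrite <- !rsum_scal, <- rsum_plus, <- rsum_scal. apply rsum_ext. intros q _.
  rewrite Rmult_minus_distr_l, cos_minus. ring. }
rewrite Hm. ring.
Qed.

Lemma cos_sum_sq (t : R) (m : nat) (a mu : nat -> R) :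
  rsum m (fun p => a p * cos (t * mu p)) ^ 2 + rsum m (fun p => a p * sin (t * mu p)) ^ 2
  = rsum m (fun p => a p ^ 2)
    + 2 * rsum m (fun p' => rsum p' (fun p => a p * a p' * cos (t * (mu p - mu p')))).
Proof.
induction m as [|m IH]; [simpl; ring|].
set (C := rsum m (fun p => a p * cos (t * mu p))).
set (S := rsum m (fun p => a p * sin (t * mu p))).
assert (Hcross : C * (a m * cos (t * mu m)) + S * (a m * sin (t * mu m))
                 = rsum m (fun p => a p * a m * cos (t * (mu p - mu m)))).
{ unfold C, S.
  rewrite <- (rsum_1 (fun _ => a m * cos (t * mu m))), <- (rsum_1 (fun _ => a m * sin (t * mu m))).
  rewrite (cos_sum_cross t m a mu 1 (fun _ => a m) (fun _ => mu m)).
  apply rsum_ext. intros. apply rsum_1. }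
assert (Hpyth := sin2_cos2 (t * mu m)). unfold Rsqr in Hpyth.
cbn [rsum]. fold C S. rewrite <- Hcross.
transitivity (C ^ 2 + S ^ 2
  + a m ^ 2 * (sin (t * mu m) * sin (t * mu m) + cos (t * mu m) * cos (t * mu m))
  + 2 * (C * (a m * cos (t * mu m)) + S * (a m * sin (t * mu m)))); [ring|].
unfold C, S. rewrite IH, Hpyth. ring.
Qed.

Section SpectralEntry.
Variables (V : list nat) (adj : nat -> nat -> bool) (t : R) (x y : nat).
Variables (m m' : nat) (a mu b nu : nat -> R).
Hypothesis Hpow : forall q, matpow V (Lap V adj) q x y
  = rsum m (fun p => a p * mu p ^ q) + rsum m' (fun p => b p * nu p ^ q).

Lemma Ure_spectral :
  Ure V adj t x y = rsum m (fun p => a p * cos (t * mu p)) + rsum m' (fun p => b p * cos (t * nu p)).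
Proof.
unfold Ure. apply series_value_eq.
eapply infinite_sum_ext;
  [| apply infinite_sum_plus; [apply (cos_series_rsum t m a mu) | apply (cos_series_rsum t m' b nu)]].
intro q. rewrite Hpow. ring.
Qed.

Lemma Uim_spectral :
  Uim V adj t x y = rsum m (fun p => a p * sin (t * mu p)) + rsum m' (fun p => b p * sin (t * nu p)).
Proof.
unfold Uim. apply series_value_eq.
eapply infinite_sum_ext;
  [| apply infinite_sum_plus; [apply (sin_series_rsum t m a mu) | apply (sin_series_rsum t m' b nu)]].
intro q. rewrite Hpow. ring.
Qed.

Lemma Ptrans_spectral :
  Ptrans V adj t x y =
    (rsum m (fun p => a p ^ 2)
     + 2 * rsum m (fun p' => rsum p' (fun p => a p * a p' * cos (t * (mu p - mu p')))))
    + (rsum m' (fun p => b p ^ 2)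
     + 2 * rsum m' (fun p' => rsum p' (fun p => b p * b p' * cos (t * (nu p - nu p')))))
    + 2 * rsum m (fun p => rsum m' (fun q => a p * b q * cos (t * (mu p - nu q)))).
Proof.
unfold Ptrans. rewrite Ure_spectral, Uim_spectral, <- !cos_sum_sq, <- cos_sum_cross. ring.
Qed.

End SpectralEntry.

Module OrthonormalBasis.
Import all_boot all_algebra Rstruct.
Import GRing.Theory.

Lemma lsum_bigop (V : list nat) (f : nat -> R) :
  lsum V f = (\sum_(a < length V) f (List.nth a V 0%N))%R.
Proof. elim: V => [|z V IH] /=; [by rewrite big_ord0 | by rewrite big_ord_recl /= IH]. Qed.

Lemma rsum_bigop (m : nat) (f : nat -> R) : rsum m f = (\sum_(p < m) f p)%R.
Proof. elim: m => [|m IH] /=; [by rewrite big_ord0 | by rewrite big_ord_recr /= IH]. Qed.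

(* An orthonormal family of |V| vectors in R^V has a matrix Q with Q Q^T = 1,
   hence Q^T Q = 1, which is the completeness relation. *)
Lemma orthonormal_complete (V : list nat) (e : nat -> nat -> R) :
  NoDup V ->
  (forall p q, lt p (length V) -> lt q (length V) ->
     lsum V (fun z => e p z * e q z) = if Nat.eqb p q then 1 else 0) ->
  forall x y, In x V -> In y V ->
    rsum (length V) (fun p => e p x * e p y) = if Nat.eqb x y then 1 else 0.
Proof.
move=> HV Hon x y Hx Hy.
set m := length V.
pose Q : 'M[R]_m := (\matrix_(p < m, a < m) e p (List.nth a V 0%N))%R.
have QQt : (Q *m Q^T)%R = 1%:M%R.
  apply/matrixP => p q; rewrite !mxE.
  have -> : (\sum_j Q p j * Q^T j q)%R = lsum V (fun z => e p z * e q z).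
    by rewrite lsum_bigop; apply: eq_bigr => a _; rewrite !mxE.
  rewrite Hon; try (apply/ltP; exact: ltn_ord).
  case: (eqVneq p q) => [->|Hpq]; first by rewrite Nat.eqb_refl.
  suff -> : Nat.eqb p q = false by [].
  by apply/Nat.eqb_neq => E; move/eqP: Hpq; apply; exact: ord_inj.
have [a [Ha' Hxa]] := In_nth V x 0%N Hx.
have [b [Hb' Hyb]] := In_nth V y 0%N Hy.
have Ha : (a < m)%N by apply/ltP.
have Hb : (b < m)%N by apply/ltP.
have := congr1 (fun M : 'M[R]_m => M (Ordinal Ha) (Ordinal Hb)) (mulmx1C QQt).
rewrite /= !mxE.
have -> : (\sum_j Q^T (Ordinal Ha) j * Q j (Ordinal Hb))%R = rsum m (fun p => e p x * e p y).
  by rewrite rsum_bigop; apply: eq_bigr => p _; rewrite !mxE /= Hxa Hyb.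
move=> ->.
case: (eqVneq (Ordinal Ha) (Ordinal Hb)) => [[Eab]|E] /=.
  by rewrite -Hxa -Hyb Eab Nat.eqb_refl.
suff -> : Nat.eqb x y = false by [].
apply/Nat.eqb_neq => Exy; move/eqP: E; apply; apply: ord_inj => /=.
by apply: (proj1 (NoDup_nth V 0%N) HV) => //; rewrite Hxa Hyb.
Qed.

End OrthonormalBasis.

Lemma matpow_eq (V : list nat) (L : nat -> nat -> R) (P : nat -> nat -> nat -> R) :
  (forall x y, In x V -> In y V -> P 0%nat x y = if Nat.eqb x y then 1 else 0) ->
  (forall q x y, In x V -> In y V -> lsum V (fun z => L x z * P q z y) = P (S q) x y) ->
  forall q x y, In x V -> In y V -> matpow V L q x y = P q x y.
Proof.
intros H0 HS q. induction q as [|q IH]; intros x y Hx Hy; simpl.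
- symmetry. apply H0; assumption.
- unfold matmul. rewrite <- HS by assumption. apply lsum_ext. intros z Hz. rewrite IH by assumption.
  reflexivity.
Qed.

Lemma lsum_mul_eigen_comb (V : list nat) (L : nat -> nat -> R) (m : nat)
    (f : nat -> nat -> R) (g mu : nat -> R) (x q : nat) :
  (forall j, (j < m)%nat -> lsum V (fun z => L x z * f j z) = mu j * f j x) ->
  lsum V (fun z => L x z * rsum m (fun j => f j z * g j * mu j ^ q))
  = rsum m (fun j => f j x * g j * mu j ^ S q).
Proof.
intro Heig.
rewrite (lsum_ext V _ (fun z => rsum m (fun j => L x z * f j z * (g j * mu j ^ q)))).
- rewrite lsum_rsum. apply rsum_ext. intros j Hj.
  rewrite lsum_scal_r, Heig by assumption. simpl. ring.
- intros z _. rewrite <- rsum_scal. apply rsum_ext. intros; ring.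
Qed.

Lemma Lap_mul (V : list nat) (adj : nat -> nat -> bool) (x : nat) (g : nat -> R) :
  NoDup V -> In x V ->
  lsum V (fun z => Lap V adj x z * g z)
  = deg V adj x * g x - lsum V (fun z => (if adj x z then 1 else 0) * g z).
Proof.
intros ND Hx. unfold Lap.
rewrite (lsum_ext V _ (fun z => (if Nat.eqb x z then deg V adj x * g z else 0)
                                 - (if adj x z then 1 else 0) * g z)).
- rewrite lsum_minus, lsum_delta by assumption. reflexivity.
- intros z _. destruct (Nat.eqb x z); ring.
Qed.

Lemma Lap_mul_one (V : list nat) (adj : nat -> nat -> bool) (x : nat) :
  NoDup V -> In x V -> lsum V (fun z => Lap V adj x z * 1) = 0.
Proof. intros ND Hx. rewrite Lap_mul, lsum_scal_r by assumption. unfold deg. ring. Qed.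

Lemma block_basis_complete (B : list nat) (w : nat -> nat -> R) :
  NoDup B -> (0 < length B)%nat ->
  (forall j j', (j < length B - 1)%nat -> (j' < length B - 1)%nat ->
      lsum B (fun z => w j z * w j' z) = if Nat.eqb j j' then 1 else 0) ->
  (forall j, (j < length B - 1)%nat ->
      lsum B (fun z => w j z * (1 / sqrt (INR (length B)))) = 0) ->
  forall x y, In x B -> In y B ->
  rsum (length B - 1) (fun j => w j x * w j y) + 1 / INR (length B)
  = if Nat.eqb x y then 1 else 0.
Proof.
intros ND Hpos Hon Hone x y Hx Hy.
set (m := (length B - 1)%nat). set (s := 1 / sqrt (INR (length B))).
assert (Hn : 0 < INR (length B)) by (apply lt_0_INR; exact Hpos).
assert (Hs : s * s = 1 / INR (length B)).
{ unfold s, Rdiv. rewrite !Rmult_1_l, <- Rinv_mult, sqrt_sqrt by lra. reflexivity. }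
set (e := fun p z => if Nat.ltb p m then w p z else s).
assert (HL : length B = S m) by (unfold m; lia).
assert (He : forall p q, lt p (length B) -> lt q (length B) ->
   lsum B (fun z => e p z * e q z) = if Nat.eqb p q then 1 else 0).
{ intros p q Hp Hq. unfold e.
  destruct (Nat.ltb_spec p m), (Nat.ltb_spec q m).
  - apply Hon; assumption.
  - rewrite Hone by assumption. destruct (Nat.eqb_spec p q); [lia | reflexivity].
  - rewrite (lsum_ext B _ (fun z => w q z * s)) by (intros; ring).
    rewrite Hone by assumption. destruct (Nat.eqb_spec p q); [lia | reflexivity].
  - replace q with p by lia. rewrite Nat.eqb_refl, lsum_const, Hs. field. lra. }
rewrite <- (OrthonormalBasis.orthonormal_complete B e ND He x y Hx Hy), <- Hs, HL. cbn [rsum].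
unfold e at 3 4. rewrite Nat.ltb_irrefl. f_equal.
apply rsum_ext. intros p Hp. unfold e. apply Nat.ltb_lt in Hp. rewrite Hp. reflexivity.
Qed.

Lemma in_part (n : nat) (c : nat -> nat) (i x : nat) :
  In x (part n c i) <-> (x < n)%nat /\ c x = i.
Proof. unfold part. rewrite filter_In, in_seq, Nat.eqb_eq. lia. Qed.

Lemma NoDup_part (n : nat) (c : nat -> nat) (i : nat) : NoDup (part n c i).
Proof. apply NoDup_filter, seq_NoDup. Qed.

Definition extend_block (c : nat -> nat) (i : nat) (f : nat -> R) (z : nat) : R :=
  if Nat.eqb (c z) i then f z else 0.

Section Decomposition.

Variables (n k : nat) (adj : nat -> nat -> bool) (c : nat -> nat).
Variables (lam : nat -> nat -> R) (v : nat -> nat -> nat -> R).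
Variables (alpha : nat -> nat -> R) (nu : nat -> R).

Local Notation nb i := (length (part n c i)).
Local Notation N j := (rsum k (fun l => INR (nb l) * alpha j l ^ 2)).

Hypothesis Hc : forall x, (x < n)%nat -> (c x < k)%nat.
Hypothesis Hne : forall i, (i < k)%nat -> (0 < nb i)%nat.
Hypothesis Hfic : forall i j, (i < k)%nat -> (j < k)%nat -> i <> j ->
  all_adj n c adj i j \/ no_adj n c adj i j.
Hypothesis Hv_eig : forall i j x, (i < k)%nat -> (j < nb i - 1)%nat -> In x (part n c i) ->
  lsum (part n c i) (fun z => Lap (part n c i) adj x z * v i j z) = lam i j * v i j x.
Hypothesis Hv_on : forall i j j', (i < k)%nat -> (j < nb i - 1)%nat -> (j' < nb i - 1)%nat ->
  lsum (part n c i) (fun z => v i j z * v i j' z) = if Nat.eqb j j' then 1 else 0.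
Hypothesis Hv_one : forall i j, (i < k)%nat -> (j < nb i - 1)%nat ->
  lsum (part n c i) (fun z => v i j z * (1 / sqrt (INR (nb i)))) = 0.
Hypothesis Hx_on : forall j j', (j < k)%nat -> (j' < k)%nat ->
  lsum (seq 0 n) (fun z => alpha j (c z) / sqrt (N j) * (alpha j' (c z) / sqrt (N j')))
  = if Nat.eqb j j' then 1 else 0.
Hypothesis Hx_eig : forall j x, (j < k)%nat -> (x < n)%nat ->
  lsum (seq 0 n) (fun z => Lap (seq 0 n) adj x z * alpha j (c z)) = nu j * alpha j (c x).

Lemma lsum_partition (f : nat -> R) :
  lsum (seq 0 n) f = rsum k (fun l => lsum (part n c l) f).
Proof.
unfold part.
rewrite (rsum_ext k _ (fun l => lsum (seq 0 n) (fun z => if Nat.eqb (c z) l then f z else 0)))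
  by (intros; apply lsum_filter).
rewrite <- lsum_rsum. apply lsum_ext. intros z Hz. apply in_seq in Hz.
rewrite (rsum_ext k _ (fun l => if Nat.eqb l (c z) then f z else 0))
  by (intros; rewrite Nat.eqb_sym; reflexivity).
rewrite rsum_delta; [reflexivity | apply Hc; lia].
Qed.

Lemma lsum_blockwise (F : nat -> R) :
  lsum (seq 0 n) (fun z => F (c z)) = rsum k (fun l => INR (nb l) * F l).
Proof.
rewrite lsum_partition. apply rsum_ext. intros l _.
rewrite (lsum_ext _ _ (fun _ => F l)), lsum_const; [reflexivity|].
intros z Hz. apply in_part in Hz. destruct Hz as [_ ->]. reflexivity.
Qed.

Lemma deg_split (x : nat) : (x < n)%nat ->
  deg (seq 0 n) adj x = deg (part n c (c x)) adj x + dtilde n k c adj (c x).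
Proof.
intro Hx. set (i := c x).
assert (Hi : (i < k)%nat) by (apply Hc; exact Hx).
assert (Hxi : In x (part n c i)) by (apply in_part; split; [exact Hx | reflexivity]).
unfold deg at 1. rewrite lsum_partition.
unfold dtilde. rewrite <- (rsum_delta k i (deg (part n c i) adj x)), <- rsum_plus by exact Hi.
apply rsum_ext. intros l Hl.
destruct (Nat.eqb_spec l i) as [->|Hli].
- destruct (excluded_middle_informative (i <> i /\ all_adj n c adj i i)) as [[H _]|_];
    [contradiction|]. unfold deg. ring.
- destruct (excluded_middle_informative (l <> i /\ all_adj n c adj i l)) as [[_ Ha]|Hna].
  + rewrite (lsum_ext _ _ (fun _ => 1)), lsum_const; [ring|].
    intros z Hz. rewrite (Ha x z Hxi Hz). reflexivity.
  + destruct (Hfic i l Hi Hl (fun E => Hli (eq_sym E))) as [Ha|Hno]; [tauto|].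
    rewrite (lsum_ext _ _ (fun _ => 0)), lsum_const; [ring|].
    intros z Hz. rewrite (Hno x z Hxi Hz). reflexivity.
Qed.

Lemma lsum_block_eigvec_eq0 (i j : nat) : (i < k)%nat -> (j < nb i - 1)%nat ->
  lsum (part n c i) (v i j) = 0.
Proof.
intros Hi Hj. assert (H := Hv_one i j Hi Hj). rewrite lsum_scal_r in H.
assert (0 < sqrt (INR (nb i))) by (apply sqrt_lt_R0, lt_0_INR, Hne, Hi).
apply Rmult_integral in H. destruct H as [H|H]; [exact H|].
unfold Rdiv in H. rewrite Rmult_1_l in H. apply Rinv_neq_0_compat in H; [contradiction | lra].
Qed.

(* Extended by zero, v_{i,j} is an eigenvector of L_{G_n} for lam_{i,j} + dtilde_i: a vertex of
   a block fully joined to G_{n_i} sees the sum of v_{i,j}, which vanishes. *)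
Lemma Lap_extend_block (i j x : nat) : (i < k)%nat -> (j < nb i - 1)%nat -> (x < n)%nat ->
  lsum (seq 0 n) (fun z => Lap (seq 0 n) adj x z * extend_block c i (v i j) z)
  = (lam i j + dtilde n k c adj i) * extend_block c i (v i j) x.
Proof.
intros Hi Hj Hx. unfold extend_block.
rewrite Lap_mul by (apply seq_NoDup || (apply in_seq; lia)).
assert (Hrestrict : lsum (seq 0 n) (fun z => (if adj x z then 1 else 0)
                                            * (if Nat.eqb (c z) i then v i j z else 0))
                    = lsum (part n c i) (fun z => (if adj x z then 1 else 0) * v i j z)).
{ unfold part. rewrite lsum_filter. apply lsum_ext. intros z _. destruct (Nat.eqb (c z) i); ring. }
rewrite Hrestrict.
assert (Hxc : In x (part n c (c x))) by (apply in_part; split; [exact Hx | reflexivity]).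
destruct (Nat.eqb_spec (c x) i) as [E|E].
- rewrite deg_split, E by exact Hx. rewrite E in Hxc.
  assert (H := Hv_eig i j x Hi Hj Hxc). rewrite Lap_mul in H by (apply NoDup_part || exact Hxc).
  lra.
- destruct (Hfic (c x) i (Hc x Hx) Hi E) as [Ha|Hno].
  + rewrite (lsum_ext _ _ (v i j)), lsum_block_eigvec_eq0 by (assumption || (intros z Hz; rewrite (Ha x z Hxc Hz); ring)).
    ring.
  + rewrite (lsum_ext _ _ (fun _ => 0)), lsum_const by (intros z Hz; rewrite (Hno x z Hxc Hz); ring).
    ring.
Qed.

Lemma block_matpow (i : nat) : (i < k)%nat ->
  forall q x y, In x (part n c i) -> In y (part n c i) ->
  matpow (part n c i) (Lap (part n c i) adj) q x y
  = rsum (nb i - 1) (fun j => v i j x * v i j y * lam i j ^ q)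
    + rsum 1 (fun _ => 1 / INR (nb i) * 0 ^ q).
Proof.
intro Hi. apply matpow_eq.
- intros x y Hx Hy.
  rewrite <- (block_basis_complete (part n c i) (v i) (NoDup_part n c i) (Hne i Hi)
     (fun j j' => Hv_on i j j' Hi) (fun j => Hv_one i j Hi) x y Hx Hy).
  simpl. f_equal; [apply rsum_ext; intros; ring | ring].
- intros q x y Hx Hy. rewrite <- (Rmult_1_l (1 / INR (nb i))).
  rewrite (lsum_ext _ _ (fun z =>
      Lap (part n c i) adj x z * rsum (nb i - 1) (fun j => v i j z * v i j y * lam i j ^ q)
    + Lap (part n c i) adj x z * rsum 1 (fun j => 1 * (1 / INR (nb i)) * 0 ^ q)))
    by (intros; ring).
  rewrite lsum_plus. f_equal.
  + apply lsum_mul_eigen_comb. intros j Hj. apply Hv_eig; assumption.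
  + apply (lsum_mul_eigen_comb _ _ 1 (fun _ _ => 1) (fun _ => 1 / INR (nb i)) (fun _ => 0)).
    intros j _. rewrite Lap_mul_one by (apply NoDup_part || exact Hx). ring.
Qed.

Lemma sqnorm_x_pos (j : nat) : (j < k)%nat -> 0 < N j.
Proof.
intro Hj.
assert (Hge : 0 <= N j).
{ apply rsum_nonneg. intros l _. apply Rmult_le_pos; [apply pos_INR | apply pow2_ge_0]. }
destruct Hge as [Hpos|H0]; [exact Hpos|]. exfalso.
assert (H := Hx_on j j Hj Hj). rewrite Nat.eqb_refl, <- H0, sqrt_0 in H.
rewrite (lsum_ext _ _ (fun _ => 0)), lsum_const in H by (intros; unfold Rdiv; rewrite Rinv_0; ring).
lra.
Qed.

(* The vectors (alpha_j l * sqrt n_l / sqrt N_j)_l are orthonormal in R^k by [Hx_on];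
   this is their completeness relation. *)
Lemma alpha_complete (l l' : nat) : (l < k)%nat -> (l' < k)%nat ->
  rsum k (fun j => alpha j l * alpha j l' / N j)
  = if Nat.eqb l l' then 1 / INR (nb l) else 0.
Proof.
intros Hl Hl'.
set (sq := fun l => sqrt (INR (nb l))).
set (w := fun j l => alpha j l * sq l / sqrt (N j)).
assert (Hw : forall p q, lt p (length (seq 0 k)) -> lt q (length (seq 0 k)) ->
   lsum (seq 0 k) (fun z => w p z * w q z) = if Nat.eqb p q then 1 else 0).
{ intros p q Hp Hq. rewrite length_seq in Hp, Hq.
  rewrite <- (Hx_on p q Hp Hq),
    (lsum_blockwise (fun l => alpha p l / sqrt (N p) * (alpha q l / sqrt (N q)))), lsum_seq.
  apply rsum_ext. intros z _. unfold w, sq.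
  rewrite <- (sqrt_sqrt (INR (nb z))) at 3 by apply pos_INR. unfold Rdiv. ring. }
assert (H := OrthonormalBasis.orthonormal_complete (seq 0 k) w (seq_NoDup k 0) Hw l l'
               (proj2 (in_seq _ _ _) (conj (Nat.le_0_l l) Hl))
               (proj2 (in_seq _ _ _) (conj (Nat.le_0_l l') Hl'))).
rewrite length_seq in H.
assert (Hw_sum : rsum k (fun j => w j l * w j l')
                 = sq l * sq l' * rsum k (fun j => alpha j l * alpha j l' / N j)).
{ rewrite <- rsum_scal. apply rsum_ext. intros j Hj. unfold w.
  set (r := sqrt (N j)).
  assert (Hr : r * r = N j) by (apply sqrt_sqrt; left; apply sqnorm_x_pos; exact Hj).
  assert (0 < r) by (apply sqrt_lt_R0, sqnorm_x_pos; exact Hj).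
  rewrite <- Hr. field. lra. }
assert (Hsq : forall l, (l < k)%nat -> 0 < sq l) by (intros; apply sqrt_lt_R0, lt_0_INR, Hne; assumption).
assert (Hsl := Hsq l Hl). assert (Hsl' := Hsq l' Hl').
rewrite Hw_sum in H. destruct (Nat.eqb_spec l l') as [<-|_].
- assert (Hn : 0 < INR (nb l)) by (apply lt_0_INR, Hne, Hl).
  assert (Hsq2 : sq l * sq l = INR (nb l)) by (apply sqrt_sqrt, pos_INR).
  rewrite Hsq2 in H. apply (Rmult_eq_reg_l (INR (nb l))); [rewrite H; field |]; lra.
- apply Rmult_integral in H. destruct H as [H|H]; [|exact H].
  assert (0 < sq l * sq l') by (apply Rmult_lt_0_compat; assumption). lra.
Qed.

Lemma whole_matpow : forall q x y, In x (seq 0 n) -> In y (seq 0 n) ->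
  matpow (seq 0 n) (Lap (seq 0 n) adj) q x y
  = rsum (nb (c y) - 1) (fun j => extend_block c (c y) (v (c y) j) x * v (c y) j y
                                  * (lam (c y) j + dtilde n k c adj (c y)) ^ q)
    + rsum k (fun j => alpha j (c x) * (alpha j (c y) / N j) * nu j ^ q).
Proof.
apply matpow_eq.
- intros x y Hx Hy. apply in_seq in Hx. apply in_seq in Hy.
  assert (Hcy : (c y < k)%nat) by (apply Hc; lia).
  assert (Hcx : (c x < k)%nat) by (apply Hc; lia).
  rewrite (rsum_ext k _ (fun j => alpha j (c x) * alpha j (c y) / N j)) by (intros; simpl; unfold Rdiv; ring).
  rewrite alpha_complete by assumption. unfold extend_block.
  destruct (Nat.eqb_spec (c x) (c y)) as [E|E].
  + assert (Hxi : In x (part n c (c y))) by (apply in_part; split; [lia | exact E]).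
    assert (Hyi : In y (part n c (c y))) by (apply in_part; split; [lia | reflexivity]).
    rewrite <- (block_basis_complete (part n c (c y)) (v (c y)) (NoDup_part n c (c y)) (Hne _ Hcy)
       (fun j j' => Hv_on _ j j' Hcy) (fun j => Hv_one _ j Hcy) x y Hxi Hyi), E.
    f_equal. apply rsum_ext; intros; simpl; ring.
  + rewrite (rsum_ext _ _ (fun _ => 0)), rsum_const0 by (intros; simpl; ring).
    destruct (Nat.eqb_spec x y) as [->|_]; [contradiction | ring].
- intros q x y Hx Hy. apply in_seq in Hx. apply in_seq in Hy.
  assert (Hcy : (c y < k)%nat) by (apply Hc; lia).
  rewrite lsum_ext with (g := fun z =>
      Lap (seq 0 n) adj x z * rsum (nb (c y) - 1) (fun j => extend_block c (c y) (v (c y) j) z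
                        * v (c y) j y * (lam (c y) j + dtilde n k c adj (c y)) ^ q)
    + Lap (seq 0 n) adj x z * rsum k (fun j => alpha j (c z) * (alpha j (c y) / N j) * nu j ^ q))
    by (intros; ring).
  rewrite lsum_plus. f_equal.
  + apply (lsum_mul_eigen_comb _ _ _ (fun j => extend_block c (c y) (v (c y) j))).
    intros j Hj. apply Lap_extend_block; [exact Hcy | exact Hj | lia].
  + apply (lsum_mul_eigen_comb _ _ _ (fun j z => alpha j (c z))).
    intros j Hj. apply Hx_eig; [exact Hj | lia].
Qed.

Section TransitionProbability.

Variable t : R.

Lemma Ptrans_block (i x y : nat) :
  (i < k)%nat -> In x (part n c i) -> In y (part n c i) ->
  Ptrans (part n c i) adj t x y =
    rsum (nb i - 1) (fun j => v i j x ^ 2 * v i j y ^ 2) + 1 / INR (nb i) ^ 2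
    + 2 * rsum (nb i - 1) (fun j' => rsum j' (fun j =>
            v i j x * v i j y * v i j' x * v i j' y * cos (t * (lam i j - lam i j'))))
    + 2 / INR (nb i) * rsum (nb i - 1) (fun j => v i j x * v i j y * cos (t * lam i j)).
Proof.
intros Hi Hx Hy.
assert (Hn : 0 < INR (nb i)) by (apply lt_0_INR, Hne, Hi).
rewrite (Ptrans_spectral _ _ _ _ _ _ _ _ _ _ _ (fun q => block_matpow i Hi q x y Hx Hy)).
cbn [rsum].
rewrite (rsum_ext _ _ (fun j => v i j x ^ 2 * v i j y ^ 2)) by (intros; ring).
rewrite (rsum_tri_ext _ _ (fun j j' =>
           v i j x * v i j y * v i j' x * v i j' y * cos (t * (lam i j - lam i j'))))
  by (intros; ring).
rewrite (rsum_ext _ (fun p => 0 + v i p x * v i p y * (1 / INR (nb i)) * cos (t * (lam i p - 0)))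
                   (fun j => 1 / INR (nb i) * (v i j x * v i j y * cos (t * lam i j)))), rsum_scal
  by (intros; rewrite Rminus_0_r; ring).
field. lra.
Qed.

Lemma Ptrans_same_block (i x y : nat) :
  (i < k)%nat -> In x (part n c i) -> In y (part n c i) ->
  Ptrans (seq 0 n) adj t x y =
    Ptrans (part n c i) adj t x y
    + (rsum k (fun j => alpha j i ^ 4 / N j ^ 2)
       + 2 * rsum k (fun j' => rsum j' (fun j =>
               alpha j i ^ 2 * alpha j' i ^ 2 * cos (t * (nu j - nu j')) / (N j * N j'))))
    - 1 / INR (nb i) ^ 2
    - 2 / INR (nb i) * rsum (nb i - 1) (fun j => v i j x * v i j y * cos (t * lam i j))
    + 2 * rsum (nb i - 1) (fun j => rsum k (fun j' =>
            v i j x * v i j y * alpha j' i ^ 2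
            * cos (t * (lam i j + dtilde n k c adj i - nu j')) / N j')).
Proof.
intros Hi Hx Hy. rewrite Ptrans_block by assumption.
assert (HN : forall j, (j < k)%nat -> N j <> 0) by (intros; apply Rgt_not_eq, sqnorm_x_pos; assumption).
apply in_part in Hx as [Hxn Hcx]. apply in_part in Hy as [Hyn Hcy].
assert (Hpow : forall q, matpow (seq 0 n) (Lap (seq 0 n) adj) q x y
  = rsum (nb i - 1) (fun j => v i j x * v i j y * (lam i j + dtilde n k c adj i) ^ q)
    + rsum k (fun j => alpha j i * (alpha j i / N j) * nu j ^ q)).
{ intro q. rewrite whole_matpow by (apply in_seq; lia).
  unfold extend_block. rewrite Hcx, Hcy, Nat.eqb_refl. reflexivity. }
rewrite (Ptrans_spectral _ _ _ _ _ _ _ _ _ _ _ Hpow).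
rewrite (rsum_ext _ _ (fun j => v i j x ^ 2 * v i j y ^ 2)) by (intros; ring).
rewrite (rsum_tri_ext _ _ (fun j j' =>
           v i j x * v i j y * v i j' x * v i j' y * cos (t * (lam i j - lam i j'))))
  by (intros j j' _ _;
      replace (lam i j + dtilde n k c adj i - (lam i j' + dtilde n k c adj i))
        with (lam i j - lam i j') by ring; ring).
rewrite (rsum_ext _ (fun j => (alpha j i * (alpha j i / N j)) ^ 2)
                   (fun j => alpha j i ^ 4 / N j ^ 2))
  by (intros; field; apply HN; assumption).
rewrite (rsum_tri_ext _ (fun j j' => alpha j i * (alpha j i / N j) * (alpha j' i * (alpha j' i / N j'))
                                     * cos (t * (nu j - nu j')))
                        (fun j j' => alpha j i ^ 2 * alpha j' i ^ 2 * cos (t * (nu j - nu j'))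
                                     / (N j * N j')))
  by (intros; field; split; apply HN; lia).
rewrite (rsum_ext _ (fun j => rsum k (fun j' => v i j x * v i j y * (alpha j' i * (alpha j' i / N j'))
                                                * cos (t * (lam i j + dtilde n k c adj i - nu j'))))
                   (fun j => rsum k (fun j' => v i j x * v i j y * alpha j' i ^ 2
                                                * cos (t * (lam i j + dtilde n k c adj i - nu j')) / N j')))
  by (intros; apply rsum_ext; intros; field; apply HN; assumption).
ring.
Qed.

Lemma Ptrans_other_block (i i' x y : nat) :
  (i < k)%nat -> (i' < k)%nat -> i <> i' -> In x (part n c i) -> In y (part n c i') ->
  Ptrans (seq 0 n) adj t x y =
    rsum k (fun j => alpha j i ^ 2 * alpha j i' ^ 2 / N j ^ 2)
    + 2 * rsum k (fun j' => rsum j' (fun j =>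
            alpha j i * alpha j i' * alpha j' i * alpha j' i'
            * cos (t * (nu j - nu j')) / (N j * N j'))).
Proof.
intros Hi Hi' Hii' Hx Hy.
assert (HN : forall j, (j < k)%nat -> N j <> 0) by (intros; apply Rgt_not_eq, sqnorm_x_pos; assumption).
apply in_part in Hx as [Hxn Hcx]. apply in_part in Hy as [Hyn Hcy].
assert (Hpow : forall q, matpow (seq 0 n) (Lap (seq 0 n) adj) q x y
  = rsum 0 (fun _ => 0 * 0 ^ q) + rsum k (fun j => alpha j i * (alpha j i' / N j) * nu j ^ q)).
{ intro q. rewrite whole_matpow by (apply in_seq; lia).
  unfold extend_block. rewrite Hcx, Hcy. destruct (Nat.eqb_spec i i'); [contradiction|].
  rewrite (rsum_ext _ _ (fun _ => 0)), rsum_const0 by (intros; ring). reflexivity. }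
rewrite (Ptrans_spectral _ _ _ _ _ _ _ _ _ _ _ Hpow). cbn [rsum].
rewrite (rsum_ext _ _ (fun j => alpha j i ^ 2 * alpha j i' ^ 2 / N j ^ 2))
  by (intros; field; apply HN; assumption).
rewrite (rsum_tri_ext _ _ (fun j j' => alpha j i * alpha j i' * alpha j' i * alpha j' i'
                                     * cos (t * (nu j - nu j')) / (N j * N j')))
  by (intros; field; split; apply HN; lia).
ring.
Qed.

End TransitionProbability.

End Decomposition.
Theorem lemma2p1
  (n k : nat) (adj : nat -> nat -> bool) (c : nat -> nat)
  (lam : nat -> nat -> R) (v : nat -> nat -> nat -> R)
  (alpha : nat -> nat -> R) (nu : nat -> R)
  (Hsym : forall x y, (x < n)%nat -> (y < n)%nat -> adj x y = adj y x)
  (Hirr : forall x, (x < n)%nat -> adj x x = false)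
  (Hc : forall x, (x < n)%nat -> (c x < k)%nat)
  (Hne : forall i, (i < k)%nat -> (0 < length (part n c i))%nat)
  (Hfic : forall i j, (i < k)%nat -> (j < k)%nat -> i <> j ->
          all_adj n c adj i j \/ no_adj n c adj i j)
  (Hv_eig : forall i j x, (i < k)%nat -> (j < length (part n c i) - 1)%nat ->
          In x (part n c i) ->
          lsum (part n c i) (fun z => Lap (part n c i) adj x z * v i j z)
          = lam i j * v i j x)
  (Hv_on : forall i j j', (i < k)%nat -> (j < length (part n c i) - 1)%nat ->
          (j' < length (part n c i) - 1)%nat ->
          lsum (part n c i) (fun z => v i j z * v i j' z)
          = if Nat.eqb j j' then 1 else 0)
  (Hv_one : forall i j, (i < k)%nat -> (j < length (part n c i) - 1)%nat ->
          lsum (part n c i) (fun z => v i j z * (1 / sqrt (INR (length (part n c i)))))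
          = 0)
  (Hx_on : forall j j', (j < k)%nat -> (j' < k)%nat ->
          lsum (seq 0 n) (fun z =>
            alpha j (c z) / sqrt (rsum k (fun l => INR (length (part n c l)) * alpha j l ^ 2))
          * (alpha j' (c z) / sqrt (rsum k (fun l => INR (length (part n c l)) * alpha j' l ^ 2))))
          = if Nat.eqb j j' then 1 else 0)
  (Hx_eig : forall j x, (j < k)%nat -> (x < n)%nat ->
          lsum (seq 0 n) (fun z => Lap (seq 0 n) adj x z * alpha j (c z))
          = nu j * alpha j (c x))
  (t : R) (Ht : 0 <= t) :
  let ni i := INR (length (part n c i)) in
  let N j := rsum k (fun l => INR (length (part n c l)) * alpha j l ^ 2) in
  (forall i x y, (i < k)%nat -> In x (part n c i) -> In y (part n c i) ->
     let m := (length (part n c i) - 1)%nat in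
     let PGi :=
       rsum m (fun j => v i j x ^ 2 * v i j y ^ 2) + 1 / ni i ^ 2
       + 2 * rsum m (fun j' => rsum j' (fun j =>
               v i j x * v i j y * v i j' x * v i j' y * cos (t * (lam i j - lam i j'))))
       + 2 / ni i * rsum m (fun j => v i j x * v i j y * cos (t * lam i j)) in
     let Ptil :=
       rsum k (fun j => alpha j i ^ 4 / N j ^ 2)
       + 2 * rsum k (fun j' => rsum j' (fun j =>
               alpha j i ^ 2 * alpha j' i ^ 2 * cos (t * (nu j - nu j')) / (N j * N j'))) in
     Ptrans (part n c i) adj t x y = PGi /\
     Ptrans (seq 0 n) adj t x y =
       Ptrans (part n c i) adj t x y + Ptil - 1 / ni i ^ 2
       - 2 / ni i * rsum m (fun j => v i j x * v i j y * cos (t * lam i j))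
       + 2 * rsum m (fun j => rsum k (fun j' =>
               v i j x * v i j y * alpha j' i ^ 2
               * cos (t * (lam i j + dtilde n k c adj i - nu j')) / N j')))
  /\
  (forall i i' x y, (i < k)%nat -> (i' < k)%nat -> i <> i' ->
     In x (part n c i) -> In y (part n c i') ->
     Ptrans (seq 0 n) adj t x y =
       rsum k (fun j => alpha j i ^ 2 * alpha j i' ^ 2 / N j ^ 2)
       + 2 * rsum k (fun j' => rsum j' (fun j =>
               alpha j i * alpha j i' * alpha j' i * alpha j' i'
               * cos (t * (nu j - nu j')) / (N j * N j')))).
Proof.
intros ni N. split.
- intros i x y Hi Hx Hy m PGi Ptil. split.
  + apply Ptrans_block with (k := k); assumption.
  + apply Ptrans_same_block with (k := k); assumption.
- intros i i' x y Hi Hi' Hii' Hx Hy. apply Ptrans_other_block with (k := k) (lam := lam) (v := v); assumption.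
Qed.
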